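(* Let $\mathcal K$ be a 2-category and $\mathscr D\subseteq\mathcal K$ a dense inclusion. Let $f:A\to C$, $g:A\to B$, $h:B\to C$ be 1-cells and $\phi:f\Rightarrow hg$ a 2-cell. If for every object $D\in\mathscr D$ and every 1-cell $a:D\to A$ the 2-cell $\phi a$ exhibits $ga$ as a left lifting of $fa$ along $h$, then $\phi$ exhibits $g$ as an absolute left lifting of $f$ along $h$.
   Context: A full sub-2-category $\mathscr D\subseteq\mathcal K$ is dense if the 2-functor $\mathcal K\to[\mathscr D^{op},\mathrm{CAT}]$, $X\mapsto\mathcal K(-,X)|_{\mathscr D}$, is fully faithful (an isomorphism on hom-categories). Given $f:A\to C$, $g:A\to B$, $h:B\to C$, a 2-cell $\phi:f\Rightarrow hg$ exhibits $g$ as a left lifting of $f$ along $h$ if for every $k:A\to B$ the assignment $\kappa\mapsto(h\kappa)\cdot\phi$ is a bijection from 2-cells $g\Rightarrow k$ to 2-cells $f\Rightarrow hk$; this left lifting is absolute if for every $j:X\to A$, $\phi j$ exhibits $gj$ as a left lifting of $fj$ along $h$. *)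

Definition castc {T : Type} {P : T -> T -> Type} {f f' g g' : T}
  (e1 : f = f') (e2 : g = g') (x : P f g) : P f' g' :=
  match e2 in _ = b return P f' b with
  | eq_refl => match e1 in _ = a return P a g with eq_refl => x end
  end.

(** A (strict) 2-category.  [comp1 g f] is "g after f";
    [vcomp b a] is vertical composite "b . a";
    [hcomp b a] is horizontal composite of [a : f => f'] then [b : g => g'],
    a 2-cell [g f => g' f']. *)
Record TwoCat := {
  ob : Type;
  hom : ob -> ob -> Type;
  cell : forall A B : ob, hom A B -> hom A B -> Type;
  id1 : forall A : ob, hom A A;
  comp1 : forall A B C : ob, hom B C -> hom A B -> hom A C;
  id2 : forall (A B : ob) (f : hom A B), cell A B f f;
  vcomp : forall (A B : ob) (f g k : hom A B),
      cell A B g k -> cell A B f g -> cell A B f k;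
  hcomp : forall (A B C : ob) (f f' : hom A B) (g g' : hom B C),
      cell B C g g' -> cell A B f f' ->
      cell A C (comp1 A B C g f) (comp1 A B C g' f');
  comp1_assoc : forall (A B C E : ob) (f : hom A B) (g : hom B C) (k : hom C E),
      comp1 A C E k (comp1 A B C g f) = comp1 A B E (comp1 B C E k g) f;
  comp1_idl : forall (A B : ob) (f : hom A B), comp1 A B B (id1 B) f = f;
  comp1_idr : forall (A B : ob) (f : hom A B), comp1 A A B f (id1 A) = f;
  vcomp_assoc : forall (A B : ob) (f g k l : hom A B)
      (a : cell A B f g) (b : cell A B g k) (c : cell A B k l),
      vcomp A B f k l c (vcomp A B f g k b a)
      = vcomp A B f g l (vcomp A B g k l c b) a;
  vcomp_idl : forall (A B : ob) (f g : hom A B) (a : cell A B f g),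
      vcomp A B f g g (id2 A B g) a = a;
  vcomp_idr : forall (A B : ob) (f g : hom A B) (a : cell A B f g),
      vcomp A B f f g a (id2 A B f) = a;
  hcomp_id : forall (A B C : ob) (f : hom A B) (g : hom B C),
      hcomp A B C f f g g (id2 B C g) (id2 A B f) = id2 A C (comp1 A B C g f);
  hcomp_interchange : forall (A B C : ob) (f f' f'' : hom A B) (g g' g'' : hom B C)
      (a : cell A B f f') (a' : cell A B f' f'')
      (b : cell B C g g') (b' : cell B C g' g''),
      hcomp A B C f f'' g g'' (vcomp B C g g' g'' b' b) (vcomp A B f f' f'' a' a)
      = vcomp A C (comp1 A B C g f) (comp1 A B C g' f') (comp1 A B C g'' f'')
          (hcomp A B C f' f'' g' g'' b' a') (hcomp A B C f f' g g' b a);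
  hcomp_assoc : forall (A B C E : ob) (f f' : hom A B) (g g' : hom B C)
      (k k' : hom C E) (a : cell A B f f') (b : cell B C g g') (c : cell C E k k'),
      castc (P := cell A E) (comp1_assoc A B C E f g k) (comp1_assoc A B C E f' g' k')
        (hcomp A C E (comp1 A B C g f) (comp1 A B C g' f') k k' c
           (hcomp A B C f f' g g' b a))
      = hcomp A B E f f' (comp1 B C E k g) (comp1 B C E k' g')
          (hcomp B C E g g' k k' c b) a;
  hcomp_idl : forall (A B : ob) (f f' : hom A B) (a : cell A B f f'),
      castc (P := cell A B) (comp1_idl A B f) (comp1_idl A B f')
        (hcomp A B B f f' (id1 B) (id1 B) (id2 B B (id1 B)) a) = a;
  hcomp_idr : forall (A B : ob) (f f' : hom A B) (a : cell A B f f'),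
      castc (P := cell A B) (comp1_idr A B f) (comp1_idr A B f')
        (hcomp A A B (id1 A) (id1 A) f f' a (id2 A A (id1 A))) = a
}.

Arguments hom {K} : rename.
Arguments cell {K A B} : rename.
Arguments id1 {K} A : rename.
Arguments comp1 {K A B C} : rename.
Arguments id2 {K A B} f : rename.
Arguments vcomp {K A B f g k} : rename.
Arguments hcomp {K A B C f f' g g'} : rename.
Arguments comp1_assoc {K A B C E} f g k : rename.

Definition lwhisk {K : TwoCat} {A B C : ob K} (h : hom B C) {g g' : hom A B}
  (k : cell g g') : cell (comp1 h g) (comp1 h g') := hcomp (id2 h) k.
Definition rwhisk {K : TwoCat} {X A B : ob K} {f f' : hom A B}
  (a : cell f f') (j : hom X A) : cell (comp1 f j) (comp1 f' j) := hcomp a (id2 j).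

(** A full sub-2-category [D] of [K] is given by a predicate on objects.
    The 2-functor  K -> [D^op, CAT],  X |-> K(-,X)|_D  sends
    - a 1-cell [u : X -> Y] to the 2-natural transformation with components
      [x |-> u x] (on 1-cells) and [a |-> u a] (on 2-cells);
    - a 2-cell [t : u => v] to the modification with components [t x]. *)

Section Dense.
Variables (K : TwoCat) (inD : ob K -> Prop).

(** Data of a transformation K(-,X)|_D => K(-,Y)|_D: a family of functors
    K(D,X) -> K(D,Y), together with strict naturality on 1-cells of D
    (needed to even state the remaining axioms). *)
Record PreNat (X Y : ob K) := {
  pn_obj : forall D : ob K, inD D -> hom D X -> hom D Y;
  pn_cell : forall (D : ob K) (HD : inD D) (x x' : hom D X),
      cell x x' -> cell (pn_obj D HD x) (pn_obj D HD x');
  pn_nat1 : forall (D D' : ob K) (HD : inD D) (HD' : inD D') (d : hom D' D)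
      (x : hom D X), pn_obj D' HD' (comp1 x d) = comp1 (pn_obj D HD x) d
}.

Arguments pn_obj {X Y}.
Arguments pn_cell {X Y} p D HD {x x'}.
Arguments pn_nat1 {X Y}.

Record TwoNat (X Y : ob K) := {
  tn_pre : PreNat X Y;
  tn_id : forall D (HD : inD D) (x : hom D X),
      pn_cell tn_pre D HD (id2 x) = id2 (pn_obj tn_pre D HD x);
  tn_comp : forall D (HD : inD D) (x x' x'' : hom D X)
      (a : cell x x') (b : cell x' x''),
      pn_cell tn_pre D HD (vcomp b a)
      = vcomp (pn_cell tn_pre D HD b) (pn_cell tn_pre D HD a);
  tn_nat_cell : forall D D' (HD : inD D) (HD' : inD D') (d : hom D' D)
      (x x' : hom D X) (a : cell x x'),
      pn_cell tn_pre D' HD' (rwhisk a d)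
      = castc (P := @cell K D' Y)
          (eq_sym (pn_nat1 tn_pre D D' HD HD' d x))
          (eq_sym (pn_nat1 tn_pre D D' HD HD' d x'))
          (rwhisk (pn_cell tn_pre D HD a) d);
  tn_nat2 : forall D D' (HD : inD D) (HD' : inD D') (d d' : hom D' D)
      (dl : cell d d') (x : hom D X),
      pn_cell tn_pre D' HD' (lwhisk x dl)
      = castc (P := @cell K D' Y)
          (eq_sym (pn_nat1 tn_pre D D' HD HD' d x))
          (eq_sym (pn_nat1 tn_pre D D' HD HD' d' x))
          (lwhisk (pn_obj tn_pre D HD x) dl)
}.

Arguments tn_pre {X Y}.

Record Modif {X Y : ob K} (t s : PreNat X Y) := {
  md_comp : forall D (HD : inD D) (x : hom D X),
      cell (pn_obj t D HD x) (pn_obj s D HD x);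
  md_natural : forall D (HD : inD D) (x x' : hom D X) (a : cell x x'),
      vcomp (pn_cell s D HD a) (md_comp D HD x)
      = vcomp (md_comp D HD x') (pn_cell t D HD a);
  md_modif : forall D D' (HD : inD D) (HD' : inD D') (d : hom D' D) (x : hom D X),
      md_comp D' HD' (comp1 x d)
      = castc (P := @cell K D' Y)
          (eq_sym (pn_nat1 t D D' HD HD' d x))
          (eq_sym (pn_nat1 s D D' HD HD' d x))
          (rwhisk (md_comp D HD x) d)
}.

Arguments md_comp {X Y t s}.

Definition repr_pre {X Y : ob K} (u : hom X Y) : PreNat X Y := {|
  pn_obj := fun D _ x => comp1 u x;
  pn_cell := fun D _ x x' a => lwhisk u a;
  pn_nat1 := fun D D' _ _ d x => comp1_assoc d x u
|}.

(** Density: the 2-functor is an isomorphism on hom-categories, i.e.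
    bijective on 1-cells (every 2-natural transformation is the image of a
    unique 1-cell) and on 2-cells (every modification between images of
    1-cells is the image of a unique 2-cell). *)
Definition dense : Prop :=
  (forall (X Y : ob K) (t : TwoNat X Y),
      exists! u : hom X Y, tn_pre t = repr_pre u)
  /\
  (forall (X Y : ob K) (u v : hom X Y) (m : Modif (repr_pre u) (repr_pre v)),
      exists! th : cell u v,
        md_comp m = (fun D (_ : inD D) (x : hom D X) => rwhisk th x)).

End Dense.

Definition left_lifting {K : TwoCat} {A B C : ob K}
  (f : hom A C) (g : hom A B) (h : hom B C) (phi : cell f (comp1 h g)) : Prop :=
  forall k : hom A B,
    forall psi : cell f (comp1 h k),
      exists! kappa : cell g k, vcomp (lwhisk h kappa) phi = psi.

Definition whisk_lift {K : TwoCat} {X A B C : ob K}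
  {f : hom A C} {g : hom A B} {h : hom B C} (phi : cell f (comp1 h g))
  (j : hom X A) : cell (comp1 f j) (comp1 h (comp1 g j)) :=
  castc (P := @cell K X C) eq_refl (eq_sym (comp1_assoc j g h)) (rwhisk phi j).

Definition absolute_left_lifting {K : TwoCat} {A B C : ob K}
  (f : hom A C) (g : hom A B) (h : hom B C) (phi : cell f (comp1 h g)) : Prop :=
  forall (X : ob K) (j : hom X A),
    left_lifting (comp1 f j) (comp1 g j) h (whisk_lift phi j).

(* If the whiskerings of [phi] by all 1-cells [x : D -> X] with [D] in the dense
   sub-2-category are left liftings, so is [phi].  Given [psi : f => h k], the
   local lifts [kappa_x : g x => k x] of [psi x] are unique, hence natural in [x]
   and compatible with precomposition: they form a modification
   K(-,g)|_D => K(-,k)|_D.  By density it is [kappa x] for a unique [kappa : g => k],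
   and [h kappa . phi = psi], as well as the uniqueness of [kappa], can be tested
   after whiskering by every such [x].  Absoluteness follows because
   [(phi j) x] is [phi (j x)]. *)

From Stdlib Require Import Eqdep FunctionalExtensionality ClassicalEpsilon.

Section PackedCells.
Context {K : TwoCat}.

(* 2-cells with their boundary packed into a dependent pair, so that cells whose
   boundaries are only propositionally equal can be compared without casts. *)
Definition packc {A B : ob K} {f g : hom A B} (a : cell f g) :
  {p : hom A B * hom A B & cell (fst p) (snd p)} :=
  existT (fun p => cell (fst p) (snd p)) (f, g) a.

Lemma packc_castc {A B : ob K} {f f' g g' : hom A B} (e1 : f = f') (e2 : g = g')
  (a : cell f g) : packc (castc (P := @cell K A B) e1 e2 a) = packc a.
Proof. destruct e1, e2; reflexivity. Qed.

Lemma packc_inj {A B : ob K} {f g : hom A B} (a b : cell f g) :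
  packc a = packc b -> a = b.
Proof. apply inj_pair2. Qed.

Lemma packc_boundary {A B : ob K} {f g f' g' : hom A B}
  (a : cell f g) (b : cell f' g') : packc a = packc b -> f = f' /\ g = g'.
Proof.
  intro H. apply (f_equal (@projT1 _ _)) in H. simpl in H.
  split; [exact (f_equal fst H) | exact (f_equal snd H)].
Qed.

Lemma packc_vcomp {A B : ob K} {f g k f' g' k' : hom A B}
  (a : cell f g) (b : cell g k) (a' : cell f' g') (b' : cell g' k') :
  packc a = packc a' -> packc b = packc b' -> packc (vcomp b a) = packc (vcomp b' a').
Proof.
  intros Ha Hb.
  destruct (packc_boundary _ _ Ha) as [-> ->], (packc_boundary _ _ Hb) as [_ ->].
  apply packc_inj in Ha, Hb. subst. reflexivity.
Qed.

Lemma packc_hcomp {A B C : ob K} {f1 f2 f1' f2' : hom A B} {g1 g2 g1' g2' : hom B C}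
  (a : cell f1 f2) (b : cell g1 g2) (a' : cell f1' f2') (b' : cell g1' g2') :
  packc a = packc a' -> packc b = packc b' -> packc (hcomp b a) = packc (hcomp b' a').
Proof.
  intros Ha Hb.
  destruct (packc_boundary _ _ Ha) as [-> ->], (packc_boundary _ _ Hb) as [-> ->].
  apply packc_inj in Ha, Hb. subst. reflexivity.
Qed.

Lemma packc_hcomp_assoc {A B C E : ob K} {f f' : hom A B} {g g' : hom B C}
  {k k' : hom C E} (a : cell f f') (b : cell g g') (c : cell k k') :
  packc (hcomp c (hcomp b a)) = packc (hcomp (hcomp c b) a).
Proof. rewrite <- hcomp_assoc. symmetry. apply packc_castc. Qed.

Lemma packc_rwhisk_comp1 {Y X A B : ob K} {f f' : hom A B}
  (a : cell f f') (x : hom X A) (d : hom Y X) :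
  packc (rwhisk (rwhisk a x) d) = packc (rwhisk a (comp1 x d)).
Proof. unfold rwhisk. rewrite <- packc_hcomp_assoc, hcomp_id. reflexivity. Qed.

Lemma packc_lwhisk_comp1 {D X B C : ob K} (h : hom B C) (k : hom X B)
  {x x' : hom D X} (a : cell x x') :
  packc (lwhisk h (lwhisk k a)) = packc (lwhisk (comp1 h k) a).
Proof. unfold lwhisk. rewrite packc_hcomp_assoc, hcomp_id. reflexivity. Qed.

Lemma packc_rwhisk_lwhisk {X A B C : ob K} (h : hom B C) {g k : hom A B}
  (c : cell g k) (x : hom X A) :
  packc (rwhisk (lwhisk h c) x) = packc (lwhisk h (rwhisk c x)).
Proof. symmetry. apply packc_hcomp_assoc. Qed.

End PackedCells.

Section Whiskering.
Context {K : TwoCat}.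

Lemma lwhisk_vcomp {A B C : ob K} (h : hom B C) {g1 g2 g3 : hom A B}
  (a : cell g1 g2) (b : cell g2 g3) :
  lwhisk h (vcomp b a) = vcomp (lwhisk h b) (lwhisk h a).
Proof. unfold lwhisk. rewrite <- hcomp_interchange, vcomp_idl. reflexivity. Qed.

Lemma rwhisk_vcomp {X A B : ob K} (j : hom X A) {f1 f2 f3 : hom A B}
  (a : cell f1 f2) (b : cell f2 f3) :
  rwhisk (vcomp b a) j = vcomp (rwhisk b j) (rwhisk a j).
Proof. unfold rwhisk. rewrite <- hcomp_interchange, vcomp_idl. reflexivity. Qed.

Lemma lwhisk_rwhisk {A B C : ob K} {f f' : hom A B} {g g' : hom B C}
  (t : cell g g') (a : cell f f') :
  vcomp (lwhisk g' a) (rwhisk t f) = hcomp t a.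
Proof. unfold lwhisk, rwhisk. rewrite <- hcomp_interchange, vcomp_idl, vcomp_idr. reflexivity. Qed.

Lemma rwhisk_lwhisk {A B C : ob K} {f f' : hom A B} {g g' : hom B C}
  (t : cell g g') (a : cell f f') :
  vcomp (rwhisk t f') (lwhisk g a) = hcomp t a.
Proof. unfold lwhisk, rwhisk. rewrite <- hcomp_interchange, vcomp_idl, vcomp_idr. reflexivity. Qed.

Lemma packc_whisk_lift {X A B C : ob K} {f : hom A C} {g : hom A B} {h : hom B C}
  (t : cell f (comp1 h g)) (j : hom X A) :
  packc (whisk_lift t j) = packc (rwhisk t j).
Proof. apply packc_castc. Qed.

Lemma packc_rwhisk_whisk_lift {Y X A B C : ob K} {f : hom A C} {g : hom A B}
  {h : hom B C} (t : cell f (comp1 h g)) (x : hom X A) (d : hom Y X) :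
  packc (rwhisk (whisk_lift t x) d) = packc (whisk_lift t (comp1 x d)).
Proof.
  rewrite packc_whisk_lift, <- packc_rwhisk_comp1. unfold rwhisk at 1.
  apply packc_hcomp; [reflexivity | apply packc_whisk_lift].
Qed.

Lemma whisk_lift_natural {D X B C : ob K} {f : hom X C} {k : hom X B} {h : hom B C}
  (t : cell f (comp1 h k)) (x x' : hom D X) (a : cell x x') :
  vcomp (lwhisk h (lwhisk k a)) (whisk_lift t x)
  = vcomp (whisk_lift t x') (lwhisk f a).
Proof.
  apply packc_inj. transitivity (packc (hcomp t a)).
  - rewrite <- lwhisk_rwhisk.
    apply packc_vcomp; [apply packc_whisk_lift | apply packc_lwhisk_comp1].
  - rewrite <- rwhisk_lwhisk.
    apply packc_vcomp; [reflexivity | symmetry; apply packc_whisk_lift].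
Qed.

Lemma packc_whisk_lift_vcomp {D X B C : ob K} {f : hom X C} {g k : hom X B}
  {h : hom B C} (t : cell f (comp1 h g)) (c : cell g k) (x : hom D X) :
  packc (vcomp (lwhisk h (rwhisk c x)) (whisk_lift t x))
  = packc (rwhisk (vcomp (lwhisk h c) t) x).
Proof.
  rewrite rwhisk_vcomp. apply packc_vcomp.
  - apply packc_whisk_lift.
  - symmetry. apply packc_rwhisk_lwhisk.
Qed.

Lemma left_lifting_packc {A B C : ob K} {f1 f2 : hom A C} {g1 g2 : hom A B}
  {h : hom B C} (p1 : cell f1 (comp1 h g1)) (p2 : cell f2 (comp1 h g2)) :
  g1 = g2 -> packc p1 = packc p2 ->
  left_lifting f1 g1 h p1 -> left_lifting f2 g2 h p2.
Proof.
  intros <- Hp. destruct (packc_boundary _ _ Hp) as [<- _].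
  apply packc_inj in Hp. subst. trivial.
Qed.

End Whiskering.

Section Density.
Context {K : TwoCat} (inD : ob K -> Prop) (Hdense : dense K inD).

Lemma dense_rwhisk_full {X Y : ob K} {u v : hom X Y}
  (kappa : forall D, inD D -> forall x : hom D X, cell (comp1 u x) (comp1 v x))
  (Hnat : forall D (HD : inD D) (x x' : hom D X) (a : cell x x'),
     vcomp (lwhisk v a) (kappa D HD x) = vcomp (kappa D HD x') (lwhisk u a))
  (Hmodif : forall D D' (HD : inD D) (HD' : inD D') (d : hom D' D) (x : hom D X),
     kappa D' HD' (comp1 x d)
     = castc (P := @cell K D' Y) (eq_sym (comp1_assoc d x u))
         (eq_sym (comp1_assoc d x v)) (rwhisk (kappa D HD x) d)) :
  exists th : cell u v, forall D (HD : inD D) (x : hom D X),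
    kappa D HD x = rwhisk th x.
Proof.
  pose (m := Build_Modif K inD X Y (repr_pre K inD u) (repr_pre K inD v)
               kappa Hnat Hmodif).
  destruct (proj2 Hdense X Y u v m) as [th [Hth _]].
  exists th. intros D HD x. exact (f_equal (fun c => c D HD x) Hth).
Qed.

Lemma dense_rwhisk_inj {X Y : ob K} {u v : hom X Y} (t1 t2 : cell u v) :
  (forall D, inD D -> forall x : hom D X, rwhisk t1 x = rwhisk t2 x) -> t1 = t2.
Proof.
  intro H.
  assert (Hnat : forall D (HD : inD D) (x x' : hom D X) (a : cell x x'),
    vcomp (lwhisk v a) (rwhisk t1 x) = vcomp (rwhisk t1 x') (lwhisk u a)).
  { intros. rewrite lwhisk_rwhisk, rwhisk_lwhisk. reflexivity. }
  assert (Hmodif : forall D D' (HD : inD D) (HD' : inD D') (d : hom D' D)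
      (x : hom D X),
    rwhisk t1 (comp1 x d)
    = castc (P := @cell K D' Y) (eq_sym (comp1_assoc d x u))
        (eq_sym (comp1_assoc d x v)) (rwhisk (rwhisk t1 x) d)).
  { intros. apply packc_inj. rewrite packc_castc. symmetry. apply packc_rwhisk_comp1. }
  pose (m := Build_Modif K inD X Y (repr_pre K inD u) (repr_pre K inD v)
               (fun D _ x => rwhisk t1 x) Hnat Hmodif).
  destruct (proj2 Hdense X Y u v m) as [th [_ Huniq]].
  transitivity th; [symmetry |]; apply Huniq; [reflexivity |].
  apply functional_extensionality_dep; intro D.
  apply functional_extensionality_dep; intro HD.
  apply functional_extensionality_dep; intro x.
  exact (H D HD x).
Qed.

End Density.

Section LocalLifts.
Context {K : TwoCat} (inD : ob K -> Prop).
Context {X B C : ob K} (f : hom X C) (g : hom X B) (h : hom B C)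
  (phi : cell f (comp1 h g)).
Hypothesis Hloc : forall D, inD D -> forall x : hom D X,
  left_lifting (comp1 f x) (comp1 g x) h (whisk_lift phi x).

Lemma local_lift_unique D (HD : inD D) (x : hom D X) {k : hom D B}
  (c1 c2 : cell (comp1 g x) k) :
  vcomp (lwhisk h c1) (whisk_lift phi x) = vcomp (lwhisk h c2) (whisk_lift phi x) ->
  c1 = c2.
Proof.
  intro E.
  destruct (Hloc D HD x k (vcomp (lwhisk h c2) (whisk_lift phi x))) as [c [_ Hc]].
  transitivity c; [symmetry |]; apply Hc; trivial.
Qed.

Context {k : hom X B} (psi : cell f (comp1 h k))
  (kappa : forall D, inD D -> forall x : hom D X, cell (comp1 g x) (comp1 k x)).
Hypothesis Hkappa : forall D (HD : inD D) (x : hom D X),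
  vcomp (lwhisk h (kappa D HD x)) (whisk_lift phi x) = whisk_lift psi x.

Lemma local_lifts_natural D (HD : inD D) (x x' : hom D X) (a : cell x x') :
  vcomp (lwhisk k a) (kappa D HD x) = vcomp (kappa D HD x') (lwhisk g a).
Proof.
  apply (local_lift_unique D HD x).
  rewrite !lwhisk_vcomp, <- !vcomp_assoc, Hkappa, (whisk_lift_natural phi),
    vcomp_assoc, Hkappa, (whisk_lift_natural psi).
  reflexivity.
Qed.

Lemma local_lifts_modif D D' (HD : inD D) (HD' : inD D') (d : hom D' D)
  (x : hom D X) :
  kappa D' HD' (comp1 x d)
  = castc (P := @cell K D' B) (eq_sym (comp1_assoc d x g))
      (eq_sym (comp1_assoc d x k)) (rwhisk (kappa D HD x) d).
Proof.
  apply (local_lift_unique D' HD' (comp1 x d)). rewrite Hkappa.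
  apply packc_inj. symmetry.
  transitivity (packc (rwhisk (vcomp (lwhisk h (kappa D HD x)) (whisk_lift phi x)) d)).
  - rewrite rwhisk_vcomp. apply packc_vcomp.
    + symmetry. apply packc_rwhisk_whisk_lift.
    + rewrite packc_rwhisk_lwhisk. unfold lwhisk.
      apply packc_hcomp; [apply packc_castc | reflexivity].
  - rewrite Hkappa. apply packc_rwhisk_whisk_lift.
Qed.

End LocalLifts.

Lemma left_lifting_of_dense {K : TwoCat} (inD : ob K -> Prop) (Hdense : dense K inD)
  {X B C : ob K} (f : hom X C) (g : hom X B) (h : hom B C) (phi : cell f (comp1 h g))
  (Hloc : forall D, inD D -> forall x : hom D X,
     left_lifting (comp1 f x) (comp1 g x) h (whisk_lift phi x)) :
  left_lifting f g h phi.
Proof.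
  intros k psi.
  assert (Hlift : forall D (HD : inD D) (x : hom D X),
    {c : cell (comp1 g x) (comp1 k x) |
      vcomp (lwhisk h c) (whisk_lift phi x) = whisk_lift psi x}).
  { intros D HD x. apply constructive_indefinite_description.
    destruct (Hloc D HD x (comp1 k x) (whisk_lift psi x)) as [c [Hc _]].
    exists c; exact Hc. }
  pose (kappa D HD x := proj1_sig (Hlift D HD x)).
  assert (Hkappa : forall D HD x,
    vcomp (lwhisk h (kappa D HD x)) (whisk_lift phi x) = whisk_lift psi x)
    by (intros; exact (proj2_sig (Hlift D HD x))).
  clearbody kappa.
  destruct (dense_rwhisk_full inD Hdense kappa
              (local_lifts_natural inD f g h phi Hloc psi kappa Hkappa)
              (local_lifts_modif inD f g h phi Hloc psi kappa Hkappa)) as [th Hth].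
  exists th. split.
  - apply (dense_rwhisk_inj inD Hdense). intros D HD x. apply packc_inj.
    rewrite <- packc_whisk_lift_vcomp, <- (Hth D HD x), Hkappa. apply packc_whisk_lift.
  - intros c Hc. apply (dense_rwhisk_inj inD Hdense). intros D HD x.
    rewrite <- (Hth D HD x). apply (local_lift_unique inD f g h phi Hloc D HD x).
    rewrite Hkappa. apply packc_inj.
    rewrite packc_whisk_lift_vcomp, Hc. apply packc_whisk_lift.
Qed.

Theorem lemma7p1 (K : TwoCat) (inD : ob K -> Prop) (Hdense : dense K inD)
  (A B C : ob K) (f : hom A C) (g : hom A B) (h : hom B C)
  (phi : cell f (comp1 h g))
  (Hloc : forall (D : ob K), inD D -> forall a : hom D A,
      left_lifting (comp1 f a) (comp1 g a) h (whisk_lift phi a)) :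
  absolute_left_lifting f g h phi.
Proof.
  intros X j.
  apply (left_lifting_of_dense inD Hdense). intros D HD x.
  apply (left_lifting_packc (whisk_lift phi (comp1 j x)) _ (comp1_assoc x j g)).
  - symmetry. rewrite packc_whisk_lift. apply packc_rwhisk_whisk_lift.
  - exact (Hloc D HD (comp1 j x)).
Qed.
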